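(* Let $p$ be an odd prime and $m>1$. Let $H$ be a subgroup of $\mathrm{GL}_m(p)$ of order coprime to $p$ which acts transitively on the nonzero vectors of $\mathbb{F}_p^m$, with $|H|\ge p^m-1$ and $|Z(H)|\ge\frac{p^m-1}{p}$. Then $H\cong\mathrm{GL}_1(p^m)$ is cyclic of order $p^m-1$. *)

From HB Require Import structures.
From mathcomp Require Import all_boot all_order all_algebra all_fingroup all_solvable.
Set Implicit Arguments. Unset Strict Implicit. Unset Printing Implicit Defensive.
Import GRing.Theory.
Local Open Scope ring_scope.

Definition transitive_on_nonzero (p n : nat) (H : {set {'GL_n['F_p]}}) : Prop :=
  forall u v : 'rV['F_p]_(n.-1.+1), u != 0 -> v != 0 ->
    exists2 g, g \in H & v = u *m GLval g.

From HB Require Import structures.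
From mathcomp Require Import all_boot all_order all_algebra all_fingroup all_solvable.
From mathcomp Require Import zify.

(* The matrices commuting with everything that commutes with Z(H) form a
   commutative ring K of matrices commuting with H.  By transitivity, a nonzero
   element of K kills no nonzero vector, so K embeds additively into F_p^m via
   k |-> v0 k (any fixed v0 <> 0), and |K| = p^e with e <= m.  Since Z(H) sits
   in K \ {0}, the bound on |Z(H)| forces e = m; then K maps onto F_p^m, which
   forces H into K.  Thus |H| < |K| = p^m, and H is a finite group of units of
   a ring in which h - 1 is invertible for h <> 1, hence cyclic. *)

Set Implicit Arguments. Unset Strict Implicit. Unset Printing Implicit Defensive.
Import GRing.Theory.
Local Open Scope ring_scope.

Section MatrixCentralizer.
Variables (R : finPzRingType) (n : nat).
Implicit Types (A B : {set 'M[R]_n}) (k : 'M[R]_n).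

Definition mxcent A := [set k | [forall x in A, k *m x == x *m k]].

Lemma mxcentP A k : reflect {in A, forall x, k *m x = x *m k} (k \in mxcent A).
Proof.
by rewrite inE; apply: (iffP forall_inP) => kA x /kA => [/eqP|->].
Qed.

Lemma mxcent_zmod_closed A : zmod_closed (mxcent A).
Proof.
split; first by apply/mxcentP => x _; rewrite mul0mx mulmx0.
move=> k1 k2 /mxcentP k1A /mxcentP k2A; apply/mxcentP => x Ax.
by rewrite mulmxBl mulmxBr k1A ?k2A.
Qed.

Lemma mxcentS A B : A \subset B -> mxcent B \subset mxcent A.
Proof.
move=> /subsetP sAB; apply/subsetP => k /mxcentP kB.
by apply/mxcentP => x /sAB; apply: kB.
Qed.

Lemma sub_mxcent2 A : A \subset mxcent (mxcent A).
Proof.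
apply/subsetP => x Ax; apply/mxcentP => k /mxcentP kA.
by rewrite kA.
Qed.

Lemma mxcent2_comm A : A \subset mxcent A ->
  {in mxcent (mxcent A) &, forall k1 k2, k1 *m k2 = k2 *m k1}.
Proof.
move=> cAA k1 k2 /mxcentP k1A2 A2k2; apply: k1A2.
by apply: subsetP A2k2; apply: mxcentS.
Qed.

End MatrixCentralizer.

Lemma delta_mx_neq0 {R : nzRingType} m n (i : 'I_m) (j : 'I_n) :
  delta_mx i j != 0 :> 'M[R]_(m, n).
Proof. by apply/eqP => /matrixP/(_ i j)/eqP; rewrite !mxE !eqxx oner_eq0. Qed.

Section GeneralLinearGroup.
Variables (R : finComUnitRingType) (n : nat).
Implicit Types A B : {set {'GL_n.+1[R]}}.

Lemma GLval_mxcent A B : (A \subset 'C(B))%g -> GLval @: A \subset mxcent (GLval @: B).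
Proof.
move=> cAB; apply/subsetP => _ /imsetP[a Aa ->]; apply/mxcentP => _ /imsetP[b Bb ->].
by rewrite -!GL_MxE (centsP cAB a Aa b Bb).
Qed.

Lemma card_GLval_lt A (K : {set 'M[R]_n.+1}) :
  GLval @: A \subset K -> 0 \in K -> (#|A| < #|K|)%N.
Proof.
move=> sAK K0; rewrite -(card_imset _ val_inj) (cardsD1 0 K) K0 ltnS.
apply/subset_leq_card/subsetP => _ /imsetP[a Aa ->].
rewrite !inE (subsetP sAK) ?imset_f // andbT.
by apply: contraTneq (GL_unit a) => ->; rewrite unitr0.
Qed.

End GeneralLinearGroup.

Section TransitiveMatrixGroup.
Variables (F : finFieldType) (n : nat) (H : {group {'GL_n.+1[F]}}).
Hypothesis transH : forall u v : 'rV[F]_n.+1, u != 0 -> v != 0 ->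
  exists2 g, g \in H & v = u *m GLval g.

Implicit Types (k : 'M[F]_n.+1) (v : 'rV[F]_n.+1).

Local Notation Hmx := (GLval @: H).
Local Notation v0 := (delta_mx 0 0 : 'rV[F]_n.+1).

Lemma commutant_eq0 k v : k \in mxcent Hmx -> v != 0 -> v *m k = 0 -> k = 0.
Proof.
move=> /mxcentP cHk nz_v vk0; apply/row_matrixP => i; rewrite row0 rowE.
have [g Hg ->] := transH nz_v (delta_mx_neq0 0 i).
by rewrite -mulmxA -cHk ?imset_f // mulmxA vk0 mul0mx.
Qed.

Lemma commutant_unitmx k : k \in mxcent Hmx -> k != 0 -> k \in unitmx.
Proof.
move=> cHk nz_k; rewrite -row_free_unit; apply: inj_row_free => v vk0.
by apply: contraNeq nz_k => nz_v; apply/eqP; apply: commutant_eq0 nz_v vk0.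
Qed.

Variable K : {set 'M[F]_n.+1}.
Hypotheses (K_zmod : zmod_closed K) (K_commutant : K \subset mxcent Hmx).

Lemma commutant_mulmx_inj v : v != 0 -> {in K &, injective (mulmx v)}.
Proof.
case: K_zmod => _ KB nz_v k1 k2 Kk1 Kk2 vk12; apply/eqP; rewrite -subr_eq0.
apply/eqP/(commutant_eq0 _ nz_v); first exact: subsetP K_commutant _ (KB _ _ Kk1 Kk2).
by rewrite mulmxBr vk12 subrr.
Qed.

Lemma card_mulmx_commutant : #|mulmx v0 @: K| = #|K|.
Proof. exact/card_in_imset/commutant_mulmx_inj/delta_mx_neq0. Qed.

Lemma dvdn_card_commutant : (#|K| %| #|F| ^ n.+1)%N.
Proof.
have gW : group_set (mulmx v0 @: K).
  case: K_zmod => K0 KB; apply/group_setP; split; first by apply/imsetP; exists 0; rewrite ?mulmx0.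
  move=> _ _ /imsetP[k1 Kk1 ->] /imsetP[k2 Kk2 ->].
  have Kk12 : k1 + k2 \in K by rewrite -[k2]opprK KB // -sub0r KB.
  by apply/imsetP; exists (k1 + k2); rewrite ?mulmxDr.
have -> : (#|F| ^ n.+1)%N = #|[set: 'rV[F]_n.+1]| by rewrite cardsT card_mx mul1n.
by rewrite -card_mulmx_commutant (cardSg (subsetT (Group gW))).
Qed.

Hypothesis K_comm : {in K &, forall k1 k2, k1 *m k2 = k2 *m k1}.

Lemma sub_full_commutant : #|K| = (#|F| ^ n.+1)%N -> Hmx \subset K.
Proof.
move=> cardK; have onto u : u \in mulmx v0 @: K.
  suff -> : mulmx v0 @: K = [set: 'rV_n.+1] by rewrite inE.
  by apply/eqP; rewrite eqEcard subsetT cardsT card_mx mul1n card_mulmx_commutant cardK leqnn.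
apply/subsetP => _ /imsetP[h Hh ->]; have /imsetP[k Kk v0hk] := onto (v0 *m GLval h).
suff -> : GLval h = k by [].
apply/row_matrixP => i; rewrite !rowE; have /imsetP[k' Kk' ->] := onto (delta_mx 0 i).
have /mxcentP cHk' := subsetP K_commutant _ Kk'.
by rewrite -!mulmxA cHk' ?imset_f // !mulmxA v0hk -!mulmxA K_comm.
Qed.

Lemma cyclic_sub_commutant : Hmx \subset K -> cyclic H.
Proof.
move=> sHK; have cHH x y : x \in H -> y \in H -> GLval x *m GLval y = GLval y *m GLval x.
  by move=> Hx Hy; rewrite K_comm // (subsetP sHK) ?imset_f.
apply: (@div_ring_mul_group_cyclic _ _ _ (@GLval n.+1 _)) => //.
- move=> x /setD1P[x1 Hx]; apply: commutant_unitmx.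
    have HK y : y \in H -> GLval y \in K by move=> Hy; apply: (subsetP sHK); apply: imset_f.
    case: K_zmod => _ KB; apply/(subsetP K_commutant)/KB; [exact: HK | exact: HK 1%g (group1 H)].
  by rewrite subr_eq0; apply: contra x1 => /eqP x1; apply/eqP/val_inj.
- by apply/centsP => x Hx y Hy; apply: val_inj; exact: cHH.
Qed.

End TransitiveMatrixGroup.

Lemma ltn_mul_exp_sub1 (p e m : nat) :
  (1 < p)%N -> (e < m)%N -> (p * (p ^ e - 1) < p ^ m - 1)%N.
Proof.
move=> p_gt1 lt_em; have : (p ^ e.+1 <= p ^ m)%N by rewrite leq_exp2l.
rewrite expnS; have := expn_gt0 p e; rewrite (ltnW p_gt1) /=; nia.
Qed.

Theorem lemma5p16 (p m : nat) (H : {group {'GL_m['F_p]}}) :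
  prime p -> odd p -> (1 < m)%N ->
  coprime #|H| p ->
  transitive_on_nonzero H ->
  (p ^ m - 1 <= #|H|)%N ->
  (p ^ m - 1 <= p * #|'Z(H)%g|)%N ->
  cyclic H /\ #|H| = (p ^ m - 1)%N.
Proof.
move=> p_pr _ m_gt1 _; case: m H m_gt1 => [|n] H // _ transH le_H le_Z.
pose K : {set 'M['F_p]_n.+1} := mxcent (mxcent (GLval @: 'Z(H)%g)).
have K_zmod : zmod_closed K := mxcent_zmod_closed _.
have K0 : 0 \in K := proj1 K_zmod.
have ZK : GLval @: 'Z(H)%g \subset K := sub_mxcent2 _.
have K_commutant : K \subset mxcent (GLval @: H).
  by apply/mxcentS/GLval_mxcent; rewrite centsC subsetIr.
have K_comm : {in K &, forall k1 k2, k1 *m k2 = k2 *m k1}.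
  exact: mxcent2_comm (GLval_mxcent (center_abelian H)).
have [e le_en cardK] : exists2 e, (e <= n.+1)%N & #|K| = (p ^ e)%N.
  have := dvdn_card_commutant transH K_zmod K_commutant.
  by rewrite card_Fp // => /(dvdn_pfactor _ _ p_pr).
have {le_en}cardK : #|K| = (p ^ n.+1)%N.
  suff e_n : e = n.+1 by rewrite cardK e_n.
  apply/eqP; rewrite eqn_leq le_en leqNgt; apply/negP => lt_en.
  have := ltn_mul_exp_sub1 (prime_gt1 p_pr) lt_en; rewrite ltnNge => /negP; apply.
  have := card_GLval_lt ZK K0; rewrite cardK => ltZK.
  by rewrite (leq_trans le_Z) // leq_mul2l -ltnS subn1 prednK ?expn_gt0 ?prime_gt0 // ltZK orbT.
have sHK : GLval @: H \subset K.
  by apply: (sub_full_commutant transH K_zmod K_commutant K_comm); rewrite card_Fp.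
split; first exact: (cyclic_sub_commutant transH K_zmod K_commutant K_comm sHK).
apply/eqP; rewrite eqn_leq le_H andbT leq_subRL ?expn_gt0 ?prime_gt0 // add1n -cardK.
exact: card_GLval_lt sHK K0.
Qed.
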